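(* In the setting described in the context, let $\mathcal L_\tau(\theta)=\mathcal L(\theta)+\frac\tau2\|\theta\|_2^2$ with $\tau=c_\tau\min\{\kappa_1/\kappa_2,1/(\kappa_3\sqrt{d+1})\}\sqrt{\log n/(nL)}$ for a constant $c_\tau>0$. Then with probability at least $1-O(n^{-10})$, $$\|[\nabla\mathcal L_\tau(\theta^* )]_{1:n}\|_\infty\lesssim\sqrt{\frac{np\log n}{L}},\qquad\|[\nabla\mathcal L_\tau(\theta^* )]_{n+1:n+d}\|_2\lesssim\sqrt{\frac{(d+1)np\log n}{L}}.$$
   Context: Setting. Items $1,\dots,n$ have fixed covariates $x_1,\dots,x_n\in\mathbb R^d$, $d<n$, rescaled so $\|x_i\|_2\le\sqrt{(d+1)/n}$; $\tilde x_i=(e_i^\top,x_i^\top)^\top\in\mathbb R^{n+d}$, $e_i$ canonical in $\mathbb R^n$; $\theta=(\alpha^\top,\beta^\top)^\top$. True $\theta^*=(\alpha^{*\top},\beta^{*\top})^\top$. Erdős–Rényi comparison graph $\mathcal G=([n],\mathcal E)$, edge probability $p$; for each edge and $l\in[L]$, independent $y^{(l)}_{j,i}\in\{0,1\}$ with $P(y^{(l)}_{j,i}=1)=\phi(\tilde x_i^\top\theta^*-\tilde x_j^\top\theta^* )$, $\phi(t)=e^t/(1+e^t)$, $y^{(l)}_{i,j}=1-y^{(l)}_{j,i}$, $y_{j,i}=L^{-1}\sum_ly^{(l)}_{j,i}$. $\mathcal L(\theta)=\sum_{(i,j)\in\mathcal E,i>j}\{-y_{j,i}(\tilde x_i^\top\theta-\tilde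 x_j^\top\theta)+\log(1+e^{\tilde x_i^\top\theta-\tilde x_j^\top\theta})\}$. Assumption: $\Sigma=\sum_{j<i}(\tilde x_i-\tilde x_j)(\tilde x_i-\tilde x_j)^\top$ has $\|\Sigma\|\le c_1n$. Standing assumption: $pn>c_p\log n$ for a constant $c_p>0$, $n$ large. $\kappa_1=\exp(\max_{i,j}(\tilde x_i^\top\theta^*-\tilde x_j^\top\theta^* ))$, $\kappa_2=\max_i|\alpha_i^*|$, $\kappa_3=\|\theta^*\|_2/\sqrt n$. $a\lesssim b$: $a\le Cb$ with $C$ independent of $n,p,L,d,\kappa$'s. *)

From HB Require Import structures.
From mathcomp Require Import all_boot all_order all_algebra.
From mathcomp Require Import all_classical all_reals all_analysis.
Set Implicit Arguments. Unset Strict Implicit. Unset Printing Implicit Defensive.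
Import Order.TTheory GRing.Theory Num.Theory.
Local Open Scope ring_scope.

Section BTL.
Variable R : realType.
Variables (n d L : nat).

Definition l2c m (v : 'cV[R]_m) : R := Num.sqrt (\sum_(k < m) v k 0 ^+ 2).
Definition l2r m (v : 'rV[R]_m) : R := Num.sqrt (\sum_(k < m) v 0 k ^+ 2).
Definition dotc m (u v : 'cV[R]_m) : R := \sum_(k < m) u k 0 * v k 0.

Definition phi (t : R) : R := expR t / (1 + expR t).

Definition xt (x : 'I_n -> 'rV[R]_d) (i : 'I_n) : 'cV[R]_(n + d) :=
  col_mx (delta_mx i 0) (x i)^T.

Definition Sigma (x : 'I_n -> 'rV[R]_d) : 'M[R]_(n + d) :=
  \sum_(i < n) \sum_(j < n | (j < i)%N)
     (xt x i - xt x j) *m (xt x i - xt x j)^T.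

Definition score (x : 'I_n -> 'rV[R]_d) (th : 'cV[R]_(n + d)) (i : 'I_n) : R :=
  dotc (xt x i) th.

(* Outcome space: A (i,j) = 1 iff {i,j} is an edge of G (only used for j<i);
   Y (l,i,j) = y^{(l)}_{j,i}  (only used for j<i). *)
Definition Omega := ({ffun 'I_n * 'I_n -> bool} * {ffun 'I_L * 'I_n * 'I_n -> bool})%type.

(* probability weight of an outcome: independent Bernoulli(p) edges,
   independent Bernoulli(phi(s_i - s_j)) comparisons; unused bits (j >= i)
   are forced to false. *)
Definition weight (p : R) (x : 'I_n -> 'rV[R]_d) (ths : 'cV[R]_(n + d))
    (w : Omega) : R :=
  (\prod_(ij : 'I_n * 'I_n)
     (if (ij.2 < ij.1)%N then (if w.1 ij then p else 1 - p)
      else (if w.1 ij then 0 else 1))) *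
  (\prod_(lij : 'I_L * 'I_n * 'I_n)
     (let i := lij.1.2 in let j := lij.2 in
      let q := phi (score x ths i - score x ths j) in
      if (j < i)%N then (if w.2 lij then q else 1 - q)
      else (if w.2 lij then 0 else 1))).

Definition Prob (p : R) (x : 'I_n -> 'rV[R]_d) (ths : 'cV[R]_(n + d))
    (E : pred Omega) : R :=
  \sum_(w : Omega | E w) weight p x ths w.

Definition ybar (w : Omega) (i j : 'I_n) : R :=
  (L%:R)^-1 * \sum_(l < L) (w.2 (l, i, j))%:R.

Definition loss (x : 'I_n -> 'rV[R]_d) (w : Omega) (th : 'cV[R]_(n + d)) : R :=
  \sum_(i < n) \sum_(j < n | (j < i)%N && w.1 (i, j))
    (- ybar w i j * (score x th i - score x th j)
     + ln (1 + expR (score x th i - score x th j))).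

Definition kappa1 (x : 'I_n -> 'rV[R]_d) (ths : 'cV[R]_(n + d)) : R :=
  expR (\big[Order.max/0]_(i < n) \big[Order.max/0]_(j < n)
          (score x ths i - score x ths j)).
Definition kappa2 (ths : 'cV[R]_(n + d)) : R :=
  \big[Order.max/0]_(i < n) `|ths (lshift d i) 0|.
Definition kappa3 (ths : 'cV[R]_(n + d)) : R := l2c ths / Num.sqrt n%:R.

(* min{kappa1/kappa2, 1/(kappa3 sqrt(d+1))}, with a/0 read as +infinity;
   if both denominators vanish (theta* = 0) the penalty term tau*theta* is 0
   whatever tau is, and we set the factor to 0. *)
Definition tau_factor (x : 'I_n -> 'rV[R]_d) (ths : 'cV[R]_(n + d)) : R :=
  let a := kappa1 x ths / kappa2 ths in
  let b := (kappa3 ths * Num.sqrt (d.+1)%:R)^-1 in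
  if kappa2 ths == 0 then (if kappa3 ths == 0 then 0 else b)
  else if kappa3 ths == 0 then a else Order.min a b.

Definition tau (c_tau : R) (x : 'I_n -> 'rV[R]_d) (ths : 'cV[R]_(n + d)) : R :=
  c_tau * tau_factor x ths * Num.sqrt (ln n%:R / (n%:R * L%:R)).

Definition loss_tau (c_tau : R) (x : 'I_n -> 'rV[R]_d) (ths : 'cV[R]_(n + d))
    (w : Omega) (th : 'cV[R]_(n + d)) : R :=
  loss x w th + tau c_tau x ths / 2 * l2c th ^+ 2.

Definition grad (f : 'cV[R]_(n + d) -> R) (th : 'cV[R]_(n + d)) (k : 'I_(n + d)) : R :=
  derive1 (fun t : R => f (th + t *: delta_mx k 0)) 0.

Definition supnorm_first (g : 'I_(n + d) -> R) : R :=
  \big[Order.max/0]_(i < n) `|g (lshift d i)|.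
Definition l2_last (g : 'I_(n + d) -> R) : R :=
  Num.sqrt (\sum_(k < d) g (rshift n k) ^+ 2).

End BTL.

From HB Require Import structures.
From mathcomp Require Import all_boot all_order all_algebra.
From mathcomp Require Import all_classical all_reals all_analysis.
From mathcomp Require Import ring lra.
Import Order.TTheory GRing.Theory Num.Theory.
Set Implicit Arguments. Unset Strict Implicit. Unset Printing Implicit Defensive.
Local Open Scope ring_scope.

(* The k-th partial derivative of L_tau at theta* is S_k + tau theta*_k, where
   S_k sums (phi(s_i - s_j) - y_ji) (x~_i - x~_j)_k over the observed pairs j < i.
   Given the graph, the L comparisons of a pair are independent Bernoulli
   variables, so a Hoeffding-type bound on each of them, followed by averaging
   over the independent edge indicators, bounds the moment generating function
   of S_k by exp (p lambda^2 W_k / L), with W_k = sum_(j<i) (x~_i - x~_j)_k^2.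
   A Chernoff bound with a well-chosen lambda makes each one-sided deviation
   |S_k| > C sqrt (p (W_k + n) ln n / L) have probability at most n^-11, and a
   union bound over the 2 (n + d) of them costs 4 n^-10.  Outside this event,
   W_k <= 4 n on the item coordinates and sum_k W_k <= 4 n (d + 1) on the
   covariate coordinates by the norm bound on the x_i, while the choice of tau
   gives tau ||theta*|| <= c_tau sqrt (ln n / L). *)

Section ExpInequalities.
Variable R : realType.

Lemma expR_le_1Dx_sqr (x : R) : x <= 1/2 -> expR x <= 1 + x + 2 * x ^+ 2.
Proof.
move=> hx.
have hx1 : 0 < 1 - x by lra.
have hinv : expR x <= (1 - x)^-1.
  rewrite -[expR x]invrK -expRN lef_pV2 ?posrE ?expR_gt0 //.
  by have := expR_ge1Dx (- x); lra.
apply: (le_trans hinv).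
rewrite -(@ler_pM2l _ (1 - x)) // mulfV ?gt_eqF //.
have : 0 <= x ^+ 2 * (1 - 2 * x) by apply: mulr_ge0; [exact: sqr_ge0 | lra].
nra.
Qed.

(* A weak form of Hoeffding's lemma: exponent mu^2/2 instead of mu^2/8. *)
Lemma centered_bernoulli_mgf_le (q mu : R) : 0 <= q <= 1 -> `|mu| <= 1/2 ->
  q * expR (mu * (q - 1)) + (1 - q) * expR (mu * q) <= expR (mu ^+ 2 / 2).
Proof.
move=> /andP[q0 q1]; rewrite ler_norml => /andP[mu_lo mu_hi].
have e1 := @expR_le_1Dx_sqr (mu * (q - 1)) ltac:(nra).
have e0 := @expR_le_1Dx_sqr (mu * q) ltac:(nra).
apply: le_trans (expR_ge1Dx _).
have q1' : 0 <= 1 - q by lra.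
have := ler_wpM2l q0 e1; have := ler_wpM2l q1' e0.
have : 0 <= mu ^+ 2 * (1/4 - q * (1 - q)).
  by apply: mulr_ge0; [exact: sqr_ge0 | have := sqr_ge0 (q - 1/2); nra].
nra.
Qed.

Lemma bernoulli_mixture_expR_le (p u : R) : 0 <= p <= 1 -> 0 <= u <= 1/2 ->
  p * expR u + (1 - p) <= expR (2 * p * u).
Proof.
move=> /andP[p0 p1] /andP[u0 u1].
apply: le_trans (expR_ge1Dx _).
have := ler_wpM2l p0 (expR_le_1Dx_sqr u1).
have : 0 <= p * u * (1 - 2 * u) by apply: mulr_ge0; [exact: mulr_ge0 | lra].
nra.
Qed.

Lemma ln_nat_ge1 (n : nat) : (4 <= n)%N -> 1 <= ln (n%:R : R).
Proof.
move=> hn.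
have e_half : expR (1/2 : R) <= 2.
  rewrite -[1/2]opprK expRN -[X in _ <= X]invrK lef_pV2 ?posrE ?expR_gt0 //.
  by have := expR_ge1Dx (- (1/2) : R); lra.
have e_le4 : expR (1 : R) <= 4.
  rewrite [X in expR X](_ : _ = 1/2 + 1/2) ?expRD; last by field.
  by have := expR_gt0 (1/2 : R); nra.
rewrite -[X in X <= _](expRK 1) ler_ln ?posrE ?expR_gt0 ?ltr0n ?(leq_trans _ hn) //.
by apply: le_trans e_le4 _; rewrite (ler_nat _ 4).
Qed.

Lemma phi_itv (t : R) : 0 <= phi t <= 1.
Proof.
have := expR_gt0 t; rewrite /phi => et.
by rewrite divr_ge0 ?ler_pdivrMr /=; lra.
Qed.

End ExpInequalities.

Section TailConstants.
Variables (R : realType) (c_p : R).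
Hypothesis c_p_gt0 : 0 < c_p.

Definition tail_rate : R := c_p / (16 + c_p).
Definition tail_const : R := (11 + tail_rate ^+ 2) / tail_rate.

Lemma tail_rate_gt0 : 0 < tail_rate.
Proof. have c0 := c_p_gt0; apply: divr_gt0; lra. Qed.

Lemma tail_const_gt0 : 0 < tail_const.
Proof. by rewrite divr_gt0 ?tail_rate_gt0 //; have := sqr_ge0 tail_rate; lra. Qed.

Lemma tail_rate_sqr_le : 16 * tail_rate ^+ 2 <= c_p.
Proof.
have c0 := c_p_gt0; have a0 := tail_rate_gt0.
have a1 : tail_rate <= 1 by rewrite ler_pdivrMr; lra.
have a16 : tail_rate * 16 <= c_p by rewrite /tail_rate mulrAC ler_pdivrMr; nra.
by rewrite expr2; nra.
Qed.

(* lambda^2 = tail_rate^2 L l / (p (W + n)) is the Chernoff parameter of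
   noise_sum_tail_n; as c_p l < p n, lambda^2 u <= 4 tail_rate^2 L / c_p <= L / 4. *)
Lemma tail_rate_admissible (p l W nr Lr u : R) :
  0 < p -> 0 < Lr -> 1 <= l -> 0 <= W -> c_p * l < p * nr -> 0 <= u <= 4 ->
  tail_rate ^+ 2 * (Lr * l / (p * (W + nr))) * u <= Lr / 4.
Proof.
move=> p0 Lr0 l1 W0 lpn /andP[u0 u4]; have c0 := c_p_gt0.
have nr0 : 0 < nr by rewrite -(pmulr_rgt0 _ p0); apply: lt_trans lpn; nra.
have a2 := tail_rate_sqr_le.
have pWn0 : 0 < p * (W + nr) by apply: mulr_gt0 => //; lra.
have A_le : Lr * l / (p * (W + nr)) <= Lr / c_p.
  by rewrite ler_pdivrMr // mulrAC ler_pdivlMr // -mulrA ler_pM2l //; nra.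
have A0 : 0 <= Lr * l / (p * (W + nr)) by apply: divr_ge0; [apply: mulr_ge0 |]; lra.
have a20 := sqr_ge0 tail_rate.
have h1 : tail_rate ^+ 2 * (Lr * l / (p * (W + nr))) * u <=
          tail_rate ^+ 2 * (Lr * l / (p * (W + nr))) * 4.
  by apply: ler_wpM2l => //; apply: mulr_ge0.
have h2 := ler_wpM2l a20 A_le.
have : Lr / c_p * (16 * tail_rate ^+ 2) <= Lr.
  by rewrite mulrAC ler_pdivrMr // ler_pM2l.
lra.
Qed.

End TailConstants.

Section FiniteProducts.
Variable R : comNzRingType.

Lemma sum_ffun_bool_prod (I : finType) (F : I -> bool -> R) :
  \sum_(f : {ffun I -> bool}) \prod_i F i (f i) = \prod_i (F i true + F i false).
Proof. by rewrite -bigA_distr_bigA; apply: eq_bigr => i _; rewrite big_bool. Qed.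

Lemma prod_triple_rot (A B C : finType) (F : A -> B -> C -> R) :
  \prod_(abc : A * B * C) F abc.1.1 abc.1.2 abc.2 = \prod_b \prod_c \prod_a F a b c.
Proof.
rewrite -(pair_bigA _ (fun ab c => F ab.1 ab.2 c)).
rewrite -(pair_bigA _ (fun a b => \prod_c F a b c)).
by rewrite exchange_big; apply: eq_bigr => b _; rewrite exchange_big.
Qed.

End FiniteProducts.

Section Model.
Variables (R : realType) (n d L : nat) (p : R) (x : 'I_n -> 'rV[R]_d)
  (ths : 'cV[R]_(n + d)).
Hypothesis p01 : 0 <= p <= 1.

Definition win_prob (i j : 'I_n) : R := phi (score x ths i - score x ths j).

Definition edge_weight (ij : 'I_n * 'I_n) (b : bool) : R :=
  if (ij.2 < ij.1)%N then (if b then p else 1 - p) else (if b then 0 else 1).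

Definition comparison_weight (lij : 'I_L * 'I_n * 'I_n) (b : bool) : R :=
  let q := win_prob lij.1.2 lij.2 in
  if (lij.2 < lij.1.2)%N then (if b then q else 1 - q) else (if b then 0 else 1).

Definition mean (f : Omega n L -> R) : R :=
  \sum_(w : Omega n L) weight p x ths w * f w.

Lemma meanE (f : Omega n L -> R) : mean f =
  \sum_(a : {ffun 'I_n * 'I_n -> bool}) (\prod_ij edge_weight ij (a ij)) *
    \sum_(y : {ffun 'I_L * 'I_n * 'I_n -> bool})
      (\prod_lij comparison_weight lij (y lij)) * f (a, y).
Proof.
rewrite [LHS](eq_bigr (fun w => weight p x ths (w.1, w.2) * f (w.1, w.2)));
  last by case.
rewrite -(pair_bigA _ (fun a y => weight p x ths (a, y) * f (a, y))) /=.
by apply: eq_bigr => a _; rewrite mulr_sumr; apply: eq_bigr => y _; rewrite mulrA.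
Qed.

Lemma win_prob_itv i j : 0 <= win_prob i j <= 1.
Proof. exact: phi_itv. Qed.

Lemma edge_weight_ge0 ij b : 0 <= edge_weight ij b.
Proof. by case/andP: p01 => ? ?; rewrite /edge_weight; case: ifP; case: b => //; lra. Qed.

Lemma comparison_weight_ge0 lij b : 0 <= comparison_weight lij b.
Proof.
have := win_prob_itv lij.1.2 lij.2; rewrite /comparison_weight.
by case: ifP; case: b => //=; lra.
Qed.

Lemma weight_ge0 (w : Omega n L) : 0 <= weight p x ths w.
Proof.
by apply: mulr_ge0; apply: prodr_ge0 => ? _;
  [exact: edge_weight_ge0 | exact: comparison_weight_ge0].
Qed.

Lemma mean_sum (I : finType) (f : I -> Omega n L -> R) :
  mean (fun w => \sum_k f k w) = \sum_k mean (f k).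
Proof. by rewrite /mean exchange_big; apply: eq_bigr => w _; rewrite mulr_sumr. Qed.

Lemma mean_cst c : mean (fun=> c) = c.
Proof.
have edge_sum : \sum_(a : {ffun 'I_n * 'I_n -> bool}) \prod_ij edge_weight ij (a ij) = 1.
  rewrite sum_ffun_bool_prod big1 // => ij _.
  by rewrite /edge_weight; case: ifP; rewrite ?add0r // subrKC.
have cmp_sum : \sum_(y : {ffun 'I_L * 'I_n * 'I_n -> bool})
    \prod_lij comparison_weight lij (y lij) = 1.
  rewrite sum_ffun_bool_prod big1 // => lij _.
  by rewrite /comparison_weight; case: ifP; rewrite ?add0r // subrKC.
rewrite meanE; under eq_bigr => a _ do rewrite -mulr_suml cmp_sum mul1r.
by rewrite -mulr_suml edge_sum mul1r.
Qed.

Lemma ProbE (E : pred (Omega n L)) : Prob p x ths E = mean (fun w => (E w)%:R).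
Proof.
rewrite /Prob /mean big_mkcond; apply: eq_bigr => w _.
by case: (E w); rewrite ?mulr1 ?mulr0.
Qed.

Lemma Prob_union_bound (I : finType) (E : pred (Omega n L)) (B : I -> pred (Omega n L)) :
  (forall w, ~~ E w -> exists k, B k w) ->
  1 - \sum_k Prob p x ths (B k) <= Prob p x ths E.
Proof.
move=> cover; rewrite lerBlDr addrC -lerBlDr ProbE.
under eq_bigr => k _ do rewrite ProbE.
rewrite -mean_sum -[X in X - _]mean_cst /mean -sumrB; apply: ler_sum => w _.
rewrite -mulrBr; apply: ler_wpM2l; first exact: weight_ge0.
case Ew: (E w); first by rewrite subrr sumr_ge0 // => k _; rewrite ler0n.
have [k Bk] := cover w (negbT Ew).
by rewrite subr0 (bigD1 k) //= Bk lerDl sumr_ge0 // => ? _; rewrite ler0n.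
Qed.

Lemma chernoff (f : Omega n L -> R) (lam t : R) : 0 <= lam ->
  Prob p x ths (fun w => t < f w) <= expR (- (lam * t)) * mean (fun w => expR (lam * f w)).
Proof.
move=> lam0; rewrite ProbE /mean mulr_sumr; apply: ler_sum => w _.
rewrite mulrCA; apply: ler_wpM2l; first exact: weight_ge0.
rewrite -expRD; case: ltrP => [tf|]; last by rewrite expR_ge0.
by rewrite -expR0 ler_expR addrC subr_ge0 ler_wpM2l // ltW.
Qed.

Hypothesis L_gt0 : (0 < L)%N.

Definition noise_sum (v : 'I_n -> 'I_n -> R) (w : Omega n L) : R :=
  \sum_(i < n) \sum_(j < n | (j < i)%N && w.1 (i, j))
     (win_prob i j - ybar R w i j) * v i j.

Definition sqsum (v : 'I_n -> 'I_n -> R) : R :=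
  \sum_(i < n) \sum_(j < n | (j < i)%N) v i j ^+ 2.

Lemma sqsum_ge0 v : 0 <= sqsum v.
Proof. by do 2!(apply: sumr_ge0 => ? _); exact: sqr_ge0. Qed.

Definition comparison_factor lam (v : 'I_n -> 'I_n -> R) (a : {ffun 'I_n * 'I_n -> bool})
    (i j : 'I_n) (b : bool) : R :=
  if (j < i)%N && a (i, j) then expR (lam * v i j / L%:R * (win_prob i j - b%:R)) else 1.

Lemma expR_noise_sum lam v a y : expR (lam * noise_sum v (a, y)) =
  \prod_(lij : 'I_L * 'I_n * 'I_n) comparison_factor lam v a lij.1.2 lij.2 (y lij).
Proof.
rewrite [RHS](eq_bigr (fun lij =>
  comparison_factor lam v a lij.1.2 lij.2 (y (lij.1.1, lij.1.2, lij.2)))); last by case=> [[]].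
rewrite (prod_triple_rot (fun l i j => comparison_factor lam v a i j (y (l, i, j)))).
rewrite /noise_sum mulr_sumr expR_sum; apply: eq_bigr => i _.
rewrite mulr_sumr expR_sum big_mkcond /=; apply: eq_bigr => j _.
rewrite /comparison_factor; case: ifP => _; last by rewrite big1.
rewrite -expR_sum -mulr_sumr sumrB sumr_const card_ord /ybar /=.
have L_neq0 : (L%:R : R) != 0 by rewrite pnatr_eq0 -lt0n.
by congr expR; rewrite -mulr_natr; field.
Qed.

Lemma comparison_factor_mean_le lam v a (lij : 'I_L * 'I_n * 'I_n) :
  let i := lij.1.2 in let j := lij.2 in
  (lam * v i j) ^+ 2 <= L%:R / 4 ->
  comparison_weight lij true * comparison_factor lam v a i j true +
  comparison_weight lij false * comparison_factor lam v a i j false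
  <= if (j < i)%N && a (i, j) then expR ((lam * v i j / L%:R) ^+ 2 / 2) else 1.
Proof.
move=> i j small; have q01 := win_prob_itv i j.
rewrite /comparison_weight /comparison_factor -/i -/j.
case: (ltnP j i) => [ji|_] /=; last by rewrite !mulr1 add0r.
case: (a (i, j)); last by rewrite !mulr1 subrKC.
rewrite subr0; apply: centered_bernoulli_mgf_le => //.
have L_ge1 : 1 <= (L%:R : R) by rewrite ler1n.
have mu_sq : (lam * v i j / L%:R) ^+ 2 <= 1 / 4.
  rewrite expr_div_n ler_pdivrMr ?exprn_gt0 ?(lt_le_trans ltr01) //.
  by apply: (le_trans small); rewrite expr2; nra.
rewrite -[_ <= _](@ler_pXn2r _ 2) ?nnegrE //; first by rewrite real_normK ?num_real //; lra.
Qed.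

Lemma mgf_noise_sum_given_graph lam v a :
  (forall i j : 'I_n, (j < i)%N -> (lam * v i j) ^+ 2 <= L%:R / 4) ->
  \sum_(y : {ffun 'I_L * 'I_n * 'I_n -> bool})
     (\prod_lij comparison_weight lij (y lij)) * expR (lam * noise_sum v (a, y))
  <= \prod_(ij : 'I_n * 'I_n) (if (ij.2 < ij.1)%N && a ij
       then expR ((lam * v ij.1 ij.2) ^+ 2 / (2 * L%:R)) else 1).
Proof.
move=> small.
under eq_bigr => y _ do rewrite expR_noise_sum -big_split /=.
rewrite (sum_ffun_bool_prod (fun lij b =>
  comparison_weight lij b * comparison_factor lam v a lij.1.2 lij.2 b)).
pose K (i j : 'I_n) := if (j < i)%N && a (i, j)
  then expR ((lam * v i j / L%:R) ^+ 2 / 2) else 1.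
apply: (@le_trans _ _ (\prod_(lij : 'I_L * 'I_n * 'I_n) K lij.1.2 lij.2)).
  apply: ler_prod => lij _; apply/andP; split.
    by rewrite addr_ge0 // mulr_ge0 ?comparison_weight_ge0 // /comparison_factor;
      case: ifP; rewrite ?expR_ge0.
  have [ji|] := ltnP lij.2 lij.1.2; first exact: comparison_factor_mean_le (small _ _ ji).
  by rewrite /K /comparison_weight /comparison_factor leqNgt => /negbTE ->; rewrite /= !mulr1 add0r.
rewrite (prod_triple_rot (fun (_ : 'I_L) i j => K i j)).
rewrite [X in _ <= X](eq_bigr (fun ij : 'I_n * 'I_n => if (ij.2 < ij.1)%N && a (ij.1, ij.2)
   then expR ((lam * v ij.1 ij.2) ^+ 2 / (2 * L%:R)) else 1)); last by case.
rewrite -(pair_bigA _ (fun i j : 'I_n => if (j < i)%N && a (i, j)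
   then expR ((lam * v i j) ^+ 2 / (2 * L%:R)) else 1)) /=.
rewrite le_eqVlt; apply/predU1P; left; apply: eq_bigr => i _; apply: eq_bigr => j _.
rewrite /K; case: ifP => _; last by rewrite big1.
rewrite prodr_const card_ord -expRM_natl expr_div_n; congr expR; field.
by rewrite pnatr_eq0 -lt0n.
Qed.

Lemma edge_factor_mean_le lam v (ij : 'I_n * 'I_n) :
  let c := (lam * v ij.1 ij.2) ^+ 2 / (2 * L%:R) in
  ((ij.2 < ij.1)%N -> (lam * v ij.1 ij.2) ^+ 2 <= L%:R / 4) ->
  edge_weight ij true * (if (ij.2 < ij.1)%N then expR c else 1) + edge_weight ij false
  <= expR (if (ij.2 < ij.1)%N then p * (lam * v ij.1 ij.2) ^+ 2 / L%:R else 0).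
Proof.
move=> c small; rewrite /edge_weight; case: ifP => [ji|_] /=; last by rewrite mul0r add0r expR0.
have L_gt0' : (0 : R) < L%:R by rewrite ltr0n.
rewrite (_ : p * _ / _ = 2 * p * c); last by rewrite /c; field; rewrite gt_eqF.
apply: bernoulli_mixture_expR_le => //.
have := small ji; have : 1 <= (L%:R : R) by rewrite ler1n.
by rewrite /c divr_ge0 ?sqr_ge0 ?mulr_ge0 ?ler0n //= ler_pdivrMr; [nra | lra].
Qed.

Lemma mgf_noise_sum lam v :
  (forall i j : 'I_n, (j < i)%N -> (lam * v i j) ^+ 2 <= L%:R / 4) ->
  mean (fun w => expR (lam * noise_sum v w)) <= expR (p * lam ^+ 2 * sqsum v / L%:R).
Proof.
move=> small; rewrite meanE.
pose c (ij : 'I_n * 'I_n) := (lam * v ij.1 ij.2) ^+ 2 / (2 * L%:R).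
apply: (@le_trans _ _ (\sum_(a : {ffun 'I_n * 'I_n -> bool})
    \prod_ij (edge_weight ij (a ij) *
      (if (ij.2 < ij.1)%N && a ij then expR (c ij) else 1)))).
  apply: ler_sum => a _; rewrite big_split /=; apply: ler_wpM2l.
    by apply: prodr_ge0 => ij _; exact: edge_weight_ge0.
  exact: mgf_noise_sum_given_graph.
rewrite (sum_ffun_bool_prod (fun ij b => edge_weight ij b *
  (if (ij.2 < ij.1)%N && b then expR (c ij) else 1))).
apply: (@le_trans _ _ (\prod_(ij : 'I_n * 'I_n)
    expR (if (ij.2 < ij.1)%N then p * (lam * v ij.1 ij.2) ^+ 2 / L%:R else 0))).
  apply: ler_prod => ij _; rewrite andbT andbF /= mulr1.
  apply/andP; split; last exact: edge_factor_mean_le (small ij.1 ij.2).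
  by rewrite addr_ge0 ?mulr_ge0 ?edge_weight_ge0 //; case: ifP; rewrite ?expR_ge0.
rewrite -expR_sum ler_expR -(pair_bigA _ (fun i j : 'I_n =>
  if (j < i)%N then p * (lam * v i j) ^+ 2 / L%:R else 0)) /=.
rewrite /sqsum !mulr_sumr !mulr_suml le_eqVlt; apply/predU1P; left.
apply: eq_bigr => i _; rewrite mulr_sumr mulr_suml [RHS]big_mkcond; apply: eq_bigr => j _.
by case: ifP => _; rewrite ?mulr0 ?mul0r // exprMn !mulrA.
Qed.

Lemma noise_sum_tail lam v t : 0 <= lam ->
  (forall i j : 'I_n, (j < i)%N -> (lam * v i j) ^+ 2 <= L%:R / 4) ->
  Prob p x ths (fun w => t < noise_sum v w) <=
  expR (- (lam * t) + p * lam ^+ 2 * sqsum v / L%:R).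
Proof.
move=> lam0 small; rewrite expRD; apply: le_trans (chernoff _ _ lam0) _.
by rewrite ler_wpM2l ?expR_ge0 ?mgf_noise_sum.
Qed.

Definition noise_level (c_p : R) (v : 'I_n -> 'I_n -> R) : R :=
  tail_const c_p * Num.sqrt (p * (sqsum v + n%:R) * ln n%:R / L%:R).

(* Chernoff with lambda = tail_rate * sqrt (L ln n / (p (sqsum v + n))):
   then lambda * noise_level = (11 + tail_rate^2) ln n, while the quadratic
   term of the exponent is at most tail_rate^2 ln n. *)
Lemma noise_sum_tail_n c_p v :
  0 < c_p -> 0 < p -> c_p * ln n%:R < p * n%:R -> 1 <= ln (n%:R : R) ->
  (forall i j : 'I_n, (j < i)%N -> v i j ^+ 2 <= 4) ->
  Prob p x ths (fun w => noise_level c_p v < noise_sum v w) <= (n%:R ^+ 11)^-1.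
Proof.
move=> c0 p0; set W := sqsum v; set l := ln (n%:R : R).
set Lr := (L%:R : R); set nr := (n%:R : R); move=> lpn l1 v_small.
have Lr0 : 0 < Lr by rewrite ltr0n.
have nr0 : 0 < nr.
  by rewrite -(pmulr_rgt0 _ p0) (lt_trans _ lpn) ?mulr_gt0 ?(lt_le_trans ltr01 l1).
have W0 : 0 <= W := sqsum_ge0 v.
have a0 := tail_rate_gt0 c0.
set A := Lr * l / (p * (W + nr)).
have A0 : 0 <= A by apply: divr_ge0; apply: mulr_ge0; lra.
set lam := tail_rate c_p * Num.sqrt A.
have lam0 : 0 <= lam by rewrite mulr_ge0 ?sqrtr_ge0 ?ltW.
have lam2 : lam ^+ 2 = tail_rate c_p ^+ 2 * A by rewrite exprMn sqr_sqrtr.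
apply: le_trans (noise_sum_tail _ lam0 _) _.
  move=> i j ji; rewrite exprMn lam2.
  by apply: tail_rate_admissible => //; rewrite sqr_ge0 v_small.
have lam_level : lam * noise_level c_p v = (11 + tail_rate c_p ^+ 2) * l.
  rewrite /noise_level /tail_const -/W -/nr -/l -/Lr.
  rewrite (_ : lam * _ = (11 + tail_rate c_p ^+ 2) *
    (Num.sqrt A * Num.sqrt (p * (W + nr) * l / Lr))); last by rewrite /lam; field; rewrite gt_eqF.
  rewrite -sqrtrM // /A.
  rewrite (_ : Lr * l / (p * (W + nr)) * (p * (W + nr) * l / Lr) = l ^+ 2); last first.
    by field; apply/andP; split; lra.
  by rewrite sqrtr_sqr ger0_norm //; lra.
have quad_le : p * lam ^+ 2 * W / Lr <= tail_rate c_p ^+ 2 * l.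
  rewrite lam2 /A (_ : p * _ * W / Lr = tail_rate c_p ^+ 2 * l * (W / (W + nr))); last first.
    by field; apply/andP; split; lra.
  apply: ler_piMr; first by rewrite mulr_ge0 ?sqr_ge0 //; lra.
  by rewrite ler_pdivrMr; lra.
apply: le_trans (_ : expR (- (11%:R * l)) <= _).
  by rewrite ler_expR lam_level -/W -/Lr; lra.
by rewrite -mulrN expRM_natl expRN /l lnK ?posrE // exprVn.
Qed.

End Model.

Section Derivatives.
Variable R : realType.

Lemma is_derive_affine (c v t0 : R) : is_derive t0 1 (fun t : R => c + v * t) v.
Proof.
have hv : is_derive t0 1 (fun t : R => v * t) v.
  by apply: is_derive_eq (is_deriveZ v (is_derive_id t0 1)) _; rewrite /GRing.scale /= mulr1.
by have := is_deriveD (is_derive_cst c t0 1) hv; rewrite add0r.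
Qed.

Lemma is_derive_big_sum (I : Type) (r : seq I) (P : pred I) (f : I -> R -> R)
    (df : I -> R) (t0 : R) :
  (forall i, P i -> is_derive t0 1 (f i) (df i)) ->
  is_derive t0 1 (fun t => \sum_(i <- r | P i) f i t) (\sum_(i <- r | P i) df i).
Proof.
move=> hf; elim: r => [|a r IH].
  rewrite big_nil (_ : (fun _ => _) = cst 0); first exact: is_derive_cst.
  by apply/funext => t; rewrite big_nil.
rewrite big_cons (_ : (fun _ => _) =
  (fun t => (if P a then f a t else 0) + \sum_(i <- r | P i) f i t)); last first.
  by apply/funext => t; rewrite big_cons; case: ifP; rewrite ?add0r.
case Pa: (P a); first exact: is_deriveD (hf a Pa) IH.
by apply: is_derive_eq (is_deriveD (is_derive_cst 0 t0 1) IH) _; rewrite add0r.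
Qed.

Lemma is_derive_logistic_loss (y c v : R) :
  is_derive (0 : R) (1 : R) (fun t => - y * (c + v * t) + ln (1 + expR (c + v * t)))
    (v * (phi c - y)).
Proof.
have aff := is_derive_affine c v 0.
have ec := expR_gt0 c.
have dexp : is_derive (0 : R) (1 : R) (fun t => 1 + expR (c + v * t)) (expR c * v).
  have := is_derive1_comp (f := @expR R) (g := fun t => c + v * t) _ aff.
  rewrite /= mulr0 addr0 => /(_ _ (is_derive_expR c)) de.
  by have := is_deriveD (is_derive_cst (1 : R) (0 : R) (1 : R)) de; rewrite add0r.
have dln : is_derive (0 : R) (1 : R) (fun t => ln (1 + expR (c + v * t)))
    ((1 + expR c)^-1 * (expR c * v)).
  have := is_derive1_comp (f := @ln R) (g := fun t => 1 + expR (c + v * t)) _ dexp.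
  by rewrite /= mulr0 addr0; apply; apply: is_derive1_ln; lra.
apply: is_derive_eq (is_deriveD (is_deriveZ (- y) aff) dln) _.
by rewrite /phi /GRing.scale /=; field; rewrite gt_eqF //; lra.
Qed.

End Derivatives.

Section Gradient.
Variables (R : realType) (n d L : nat) (x : 'I_n -> 'rV[R]_d) (ths : 'cV[R]_(n + d)).

Definition coord_diff (k : 'I_(n + d)) (i j : 'I_n) : R := xt x i k 0 - xt x j k 0.

Lemma shift_coordE (th : 'cV[R]_(n + d)) k t m :
  (th + t *: delta_mx k 0) m 0 = th m 0 + (m == k)%:R * t.
Proof. by rewrite !mxE eqxx andbT mulrC. Qed.

Lemma score_shift (th : 'cV[R]_(n + d)) k t i :
  score x (th + t *: delta_mx k 0) i = score x th i + xt x i k 0 * t.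
Proof.
rewrite /score /dotc; under eq_bigr => m _ do rewrite shift_coordE mulrDr.
rewrite big_split /=; congr (_ + _).
rewrite (bigD1 k) //= eqxx mul1r big1 ?addr0 // => m /negbTE ->.
by rewrite mul0r mulr0.
Qed.

Lemma l2c_sqr m (v : 'cV[R]_m) : l2c v ^+ 2 = \sum_(k < m) v k 0 ^+ 2.
Proof. by rewrite sqr_sqrtr // sumr_ge0 // => k _; exact: sqr_ge0. Qed.

Lemma grad_loss_tau c_tau (w : Omega n L) k :
  grad (loss_tau c_tau x ths w) ths k =
  noise_sum x ths (coord_diff k) w + tau L c_tau x ths * ths k 0.
Proof.
rewrite /grad derive1E; set tt := tau L c_tau x ths.
have -> : (fun t => loss_tau c_tau x ths w (ths + t *: delta_mx k 0)) =
  (fun t => \sum_(i < n) \sum_(j < n | (j < i)%N && w.1 (i, j))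
     (- ybar R w i j * ((score x ths i - score x ths j) + coord_diff k i j * t) +
      ln (1 + expR ((score x ths i - score x ths j) + coord_diff k i j * t))) +
     tt / 2 * \sum_(m < n + d) (ths m 0 + (m == k)%:R * t) ^+ 2).
  apply/funext => t; rewrite /loss_tau /loss l2c_sqr -/tt.
  congr (_ + _ * _); last by apply: eq_bigr => m _; rewrite shift_coordE.
  apply: eq_bigr => i _; apply: eq_bigr => j _.
  by rewrite !score_shift /coord_diff; congr (_ * _ + ln (1 + expR _)); ring.
apply: derive_val.
have dloss := @is_derive_big_sum _ _ (index_enum 'I_n) xpredT _ _ 0 (fun i _ =>
  @is_derive_big_sum _ _ (index_enum 'I_n) (fun j => (j < i)%N && w.1 (i, j)) _ _ 0
    (fun j _ => is_derive_logistic_loss (ybar R w i j)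
                  (score x ths i - score x ths j) (coord_diff k i j))).
have dpen := @is_derive_big_sum _ _ (index_enum 'I_(n + d)) xpredT
  (fun m t => (ths m 0 + (m == k)%:R * t) ^+ 2) (fun m => (m == k)%:R * ths m 0 *+ 2) 0
  (fun m _ => is_derive_eq (is_deriveM (is_derive_affine (ths m 0) ((m == k)%:R) 0)
                 (is_derive_affine (ths m 0) ((m == k)%:R) 0)) _).
have {}dpen := dpen (fun m => ltac:(by rewrite mulr0 addr0 -mulr2n mulrC)).
apply: is_derive_eq (is_deriveD dloss (is_deriveZ (tt / 2) dpen)) _.
congr (_ + _).
  by apply: eq_bigr => i _; apply: eq_bigr => j _; rewrite mulrC.
rewrite (bigD1 k) //= eqxx big1 ?addr0 => [|m /negbTE ->]; last by rewrite mul0r mul0rn.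
by rewrite mul1r /GRing.scale /= -mulr_natr; field.
Qed.

End Gradient.

Lemma sqr_subr_le4 (R : realDomainType) (a b : R) :
  a ^+ 2 <= 1 -> b ^+ 2 <= 1 -> (a - b) ^+ 2 <= 4.
Proof. by move=> a1 b1; have := sqr_ge0 (a + b); rewrite !expr2 in a1 b1 *; nra. Qed.

Lemma sqsum_subr_le (R : realType) n (a : 'I_n -> R) :
  sqsum (fun i j => a i - a j) <= 4 * n%:R * \sum_(i < n) a i ^+ 2.
Proof.
apply: (@le_trans _ _ (\sum_(i < n) \sum_(j < n) (2 * a i ^+ 2 + 2 * a j ^+ 2))).
  apply: ler_sum => i _; rewrite big_mkcond /=; apply: ler_sum => j _.
  have := sqr_ge0 (a i + a j); have := sqr_ge0 (a i); have := sqr_ge0 (a j).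
  by case: ifP => _; rewrite !expr2; nra.
under eq_bigr => i _ do rewrite big_split /= sumr_const card_ord -mulr_sumr.
rewrite big_split /= sumr_const card_ord sumrMnl -mulr_sumr -mulrnDl -mulr_natr.
by rewrite le_eqVlt; apply/predU1P; left; ring.
Qed.

Section Covariates.
Variables (R : realType) (n d : nat) (x : 'I_n -> 'rV[R]_d).
Hypothesis x_small : forall i, l2r (x i) <= Num.sqrt ((d.+1)%:R / n%:R).
Hypothesis d_lt_n : (d < n)%N.

Let n_gt0 : (0 : R) < n%:R.
Proof. by rewrite ltr0n (leq_ltn_trans _ d_lt_n). Qed.

Lemma xt_lshift i i' : xt x i (lshift d i') 0 = (i' == i)%:R.
Proof. by rewrite /xt col_mxEu mxE eqxx andbT. Qed.

Lemma xt_rshift i k : xt x i (rshift n k) 0 = x i 0 k.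
Proof. by rewrite /xt col_mxEd mxE. Qed.

Lemma l2r_sqr_le i : \sum_(k < d) x i 0 k ^+ 2 <= (d.+1)%:R / n%:R.
Proof. by have := x_small i; rewrite /l2r ler_sqrt // divr_ge0 ?ler0n ?ltW. Qed.

Lemma xt_sqr_le1 i k : xt x i k 0 ^+ 2 <= 1.
Proof.
rewrite -[k]splitK; case: (fintype.split k) => k' /=.
  by rewrite xt_lshift; case: (k' == i); rewrite ?expr1n ?expr0n ?ler01.
rewrite xt_rshift; apply: le_trans (_ : _ <= (d.+1)%:R / n%:R) _.
  apply: le_trans (l2r_sqr_le i).
  by rewrite (bigD1 k') //= lerDl; apply: sumr_ge0 => j _; exact: sqr_ge0.
by rewrite ler_pdivrMr // mul1r ler_nat.
Qed.

Lemma coord_diff_sqr_le4 k i j : coord_diff x k i j ^+ 2 <= 4.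
Proof. exact: sqr_subr_le4 (xt_sqr_le1 i k) (xt_sqr_le1 j k). Qed.

Lemma sum_xt_lshift_sqr i : \sum_(i' < n) xt x i' (lshift d i) 0 ^+ 2 = 1.
Proof.
rewrite (bigD1 i) //= xt_lshift eqxx expr1n big1 ?addr0 // => j /negbTE ji.
by rewrite xt_lshift eq_sym ji expr0n.
Qed.

Lemma sum_xt_rshift_sqr : \sum_(k < d) \sum_(i < n) xt x i (rshift n k) 0 ^+ 2 <= (d.+1)%:R.
Proof.
under eq_bigr => k _ do under eq_bigr => i _ do rewrite xt_rshift.
rewrite exchange_big /=; apply: le_trans (ler_sum _ (fun i _ => l2r_sqr_le i)) _.
by rewrite sumr_const card_ord -[_ *+ n]mulr_natr divfK ?gt_eqF.
Qed.

End Covariates.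

Section Penalty.
Variables (R : realType) (n d L : nat) (x : 'I_n -> 'rV[R]_d) (ths : 'cV[R]_(n + d)).
Hypothesis n_gt0 : (0 < n)%N.

Lemma tau_factor_ge0 : 0 <= tau_factor x ths.
Proof.
have k2 : 0 <= kappa2 ths by exact: bigmax_ge_id.
have k3 : 0 <= kappa3 ths by rewrite divr_ge0 ?sqrtr_ge0.
have hb : 0 <= (kappa3 ths * Num.sqrt (d.+1)%:R)^-1 by rewrite invr_ge0 mulr_ge0 ?sqrtr_ge0.
have ha : 0 <= kappa1 x ths / kappa2 ths by rewrite divr_ge0 ?expR_ge0.
rewrite /tau_factor; case: ifP => _; case: ifP => _ //.
by rewrite le_min ha hb.
Qed.

(* Only the branch 1/(kappa3 sqrt(d+1)) of the minimum matters here: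
   kappa3 * sqrt n = ||theta*||. *)
Lemma tau_factor_l2c_le : tau_factor x ths * l2c ths <= Num.sqrt n%:R.
Proof.
have sn : 0 < Num.sqrt (n%:R : R) by rewrite sqrtr_gt0 ltr0n.
have l2cE : l2c ths = kappa3 ths * Num.sqrt n%:R by rewrite /kappa3 divfK ?gt_eqF.
have sd : 1 <= Num.sqrt ((d.+1)%:R : R) by rewrite -[X in X <= _]sqrtr1 ler_sqrt ?ler1n.
have [k3|k3] := eqVneq (kappa3 ths) 0; first by rewrite l2cE k3 mul0r mulr0 ltW.
have k3p : 0 < kappa3 ths by rewrite lt_def k3 divr_ge0 ?sqrtr_ge0.
have tau_le : tau_factor x ths <= (kappa3 ths * Num.sqrt (d.+1)%:R)^-1.
  by rewrite /tau_factor (negbTE k3); case: ifP => _ //; rewrite ge_min lexx orbT.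
have l2c0 : 0 <= l2c ths := sqrtr_ge0 _.
apply: le_trans (ler_wpM2r l2c0 tau_le) _.
rewrite l2cE invfM mulrACA mulVf ?gt_eqF // mul1r mulrC ler_pdivrMr; last lra.
by apply: ler_peMr => //; exact: ltW.
Qed.

Lemma tau_ge0 c_tau : 0 < c_tau -> 0 <= tau L c_tau x ths.
Proof. by move=> ct; rewrite /tau !mulr_ge0 ?tau_factor_ge0 ?sqrtr_ge0 ?ltW. Qed.

Lemma tau_l2c_le c_tau : 0 < c_tau -> (0 < L)%N ->
  tau L c_tau x ths * l2c ths <= c_tau * Num.sqrt (ln n%:R / L%:R).
Proof.
move=> ct L_gt0; rewrite /tau -!mulrA ler_pM2l // mulrCA.
apply: le_trans (ler_wpM2l (sqrtr_ge0 _) tau_factor_l2c_le) _.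
rewrite mulrC -sqrtrM ?ler0n // (_ : n%:R * _ = ln n%:R / L%:R) //.
by field; rewrite !pnatr_eq0 -!lt0n n_gt0 L_gt0.
Qed.

End Penalty.

Definition grad_const (R : realType) (c_p c_tau : R) : R :=
  4 * tail_const c_p + 2 * c_tau * Num.sqrt c_p^-1.

Lemma grad_const_gt0 (R : realType) (c_p c_tau : R) :
  0 < c_p -> 0 < c_tau -> 0 < grad_const c_p c_tau.
Proof.
move=> c0 ct; have C0 := tail_const_gt0 c0.
have := mulr_ge0 (ltW ct) (sqrtr_ge0 c_p^-1); rewrite /grad_const; lra.
Qed.

Section GradientBounds.
Variables (R : realType) (c_p c_tau : R) (n d L : nat) (p : R)
  (x : 'I_n -> 'rV[R]_d) (ths : 'cV[R]_(n + d)).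
Hypotheses (c_p_gt0 : 0 < c_p) (c_tau_gt0 : 0 < c_tau).
Hypotheses (d_lt_n : (d < n)%N) (L_gt0 : (0 < L)%N) (p_gt0 : 0 < p).
Hypotheses (lpn : c_p * ln n%:R < p * n%:R) (ln_ge1 : 1 <= ln (n%:R : R)).
Hypothesis x_small : forall i, l2r (x i) <= Num.sqrt ((d.+1)%:R / n%:R).

Let n_gt0 : (0 < n)%N. Proof. exact: leq_ltn_trans d_lt_n. Qed.

Let nr_gt0 : (0 : R) < n%:R. Proof. by rewrite ltr0n n_gt0. Qed.

Let rate_ge0 : 0 <= p * ln (n%:R : R) / L%:R.
Proof.
have := p_gt0; have := ln_ge1; have : (0 : R) < L%:R by rewrite ltr0n.
by move=> *; apply: divr_ge0; [apply: mulr_ge0 |]; lra.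
Qed.

Lemma ln_div_L_le : ln (n%:R : R) / L%:R <= c_p^-1 * (n%:R * p * ln n%:R / L%:R).
Proof.
have c0 := c_p_gt0; have l1 := ln_ge1; have := lpn => lpn'.
have cp_le : c_p <= p * n%:R by have := ler_wpM2l (ltW c0) l1; rewrite mulr1; lra.
rewrite [X in _ <= X](_ : _ = ln n%:R / L%:R * (c_p^-1 * (p * n%:R))); last by ring.
apply: ler_peMr; first by rewrite divr_ge0 ?ler0n //; lra.
by rewrite ler_pdivlMl // mulr1.
Qed.

Lemma penalty_coord_le k :
  `|tau L c_tau x ths * ths k 0| <=
  c_tau * Num.sqrt c_p^-1 * Num.sqrt (n%:R * p * ln n%:R / L%:R).
Proof.
rewrite normrM ger0_norm ?tau_ge0 //.
apply: (@le_trans _ _ (tau L c_tau x ths * l2c ths)).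
  rewrite ler_wpM2l ?tau_ge0 // /l2c -[ `|_| ]sqrtr_sqr ler_sqrt ?sumr_ge0 // => [|m _].
    by rewrite (bigD1 k) //= lerDl sumr_ge0 // => m _; exact: sqr_ge0.
  exact: sqr_ge0.
apply: le_trans (tau_l2c_le x ths n_gt0 c_tau_gt0 L_gt0) _.
have c0 : 0 <= c_p^-1 by rewrite invr_ge0 ltW.
rewrite -mulrA ler_pM2l // -sqrtrM // ler_sqrt ?ln_div_L_le //.
by rewrite mulr_ge0 // -!mulrA mulr_ge0 ?ler0n // mulrA rate_ge0.
Qed.

Lemma noise_level_sqr (v : 'I_n -> 'I_n -> R) : noise_level L p c_p v ^+ 2 =
  tail_const c_p ^+ 2 * ((sqsum v + n%:R) * (p * ln n%:R / L%:R)).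
Proof.
have := rate_ge0; have := sqsum_ge0 v; have := nr_gt0 => *.
rewrite /noise_level; have -> : p * (sqsum v + n%:R) * ln n%:R / L%:R =
  (sqsum v + n%:R) * (p * ln n%:R / L%:R) by ring.
by rewrite exprMn sqr_sqrtr // mulr_ge0 //; lra.
Qed.

Lemma noise_level_lshift_le i :
  noise_level L p c_p (coord_diff x (lshift d i)) <=
  3 * tail_const c_p * Num.sqrt (n%:R * p * ln n%:R / L%:R).
Proof.
have := rate_ge0; have := nr_gt0; have := tail_const_gt0 c_p_gt0 => C0 *.
have W_le := sqsum_subr_le (fun i' => xt x i' (lshift d i) 0).
rewrite sum_xt_lshift_sqr mulr1 in W_le.
have lhs0 : 0 <= noise_level L p c_p (coord_diff x (lshift d i)).
  by apply: mulr_ge0; [lra | exact: sqrtr_ge0].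
have rhs0 : 0 <= 3 * tail_const c_p * Num.sqrt (n%:R * p * ln n%:R / L%:R).
  by apply: mulr_ge0; [lra | exact: sqrtr_ge0].
rewrite -ler_sqr ?nnegrE // noise_level_sqr [(3 * _ * _) ^+ 2]exprMn sqr_sqrtr; last first.
  by rewrite -!mulrA mulr_ge0 ?ler0n // mulrA.
rewrite [X in _ <= X](_ : _ = tail_const c_p ^+ 2 * (9 * n%:R * (p * ln n%:R / L%:R)));
  last by ring.
apply: ler_wpM2l; first exact: sqr_ge0.
by apply: ler_wpM2r => //; lra.
Qed.

Lemma noise_level_rshift_sqsum_le :
  \sum_(k < d) noise_level L p c_p (coord_diff x (rshift n k)) ^+ 2 <=
  5 * tail_const c_p ^+ 2 * ((d.+1)%:R * n%:R * p * ln n%:R / L%:R).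
Proof.
have := rate_ge0; have := nr_gt0 => nr0 r0.
have W_le : \sum_(k < d) (sqsum (coord_diff x (rshift n k)) + n%:R) <= 5 * n%:R * (d.+1)%:R.
  rewrite big_split /= sumr_const card_ord.
  have sumW : \sum_(k < d) sqsum (coord_diff x (rshift n k)) <= 4 * n%:R * (d.+1)%:R.
    apply: le_trans (ler_sum _ (fun k _ => sqsum_subr_le (fun i => xt x i (rshift n k) 0))) _.
    rewrite -mulr_sumr; apply: ler_wpM2l; [lra | exact: sum_xt_rshift_sqr x_small d_lt_n].
  have nd : n%:R *+ d <= n%:R * (d.+1)%:R :> R.
    by rewrite -mulr_natr; apply: ler_wpM2l; [exact: ltW | rewrite ler_nat].
  lra.
under eq_bigr => k _ do rewrite noise_level_sqr.
rewrite -mulr_sumr -mulr_suml.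
rewrite [X in _ <= X](_ : _ = tail_const c_p ^+ 2 *
  ((5 * n%:R * (d.+1)%:R) * (p * ln n%:R / L%:R))); last by ring.
apply: ler_wpM2l; first exact: sqr_ge0.
by apply: ler_wpM2r.
Qed.

Lemma penalty_rshift_sqsum_le :
  \sum_(k < d) (tau L c_tau x ths * ths (rshift n k) 0) ^+ 2 <=
  c_tau ^+ 2 * c_p^-1 * ((d.+1)%:R * n%:R * p * ln n%:R / L%:R).
Proof.
have t0 : 0 <= tau L c_tau x ths by apply: tau_ge0.
have tl := tau_l2c_le x ths n_gt0 c_tau_gt0 L_gt0.
have l2c0 : 0 <= l2c ths := sqrtr_ge0 _.
have c0 := c_p_gt0; have := ln_div_L_le => ln_le.
under eq_bigr => k _ do rewrite exprMn.
rewrite -mulr_sumr; apply: (@le_trans _ _ ((tau L c_tau x ths * l2c ths) ^+ 2)).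
  rewrite [X in _ <= X]exprMn; apply: ler_wpM2l; first exact: sqr_ge0.
  rewrite l2c_sqr big_split_ord /= lerDr.
  by apply: sumr_ge0 => m _; exact: sqr_ge0.
apply: (@le_trans _ _ ((c_tau * Num.sqrt (ln n%:R / L%:R)) ^+ 2)).
  have rhs0 : 0 <= c_tau * Num.sqrt (ln n%:R / L%:R).
    by apply: mulr_ge0; [exact: ltW | exact: sqrtr_ge0].
  by rewrite ler_sqr ?nnegrE // mulr_ge0.
rewrite exprMn sqr_sqrtr ?divr_ge0 ?ler0n ?(le_trans ler01 ln_ge1) // -mulrA.
apply: ler_wpM2l; first exact: sqr_ge0.
apply: le_trans ln_le _; apply: ler_wpM2l; first by rewrite invr_ge0 ltW.
rewrite -[X in X <= _]mul1r [X in _ <= X](_ : _ = (d.+1)%:R * (n%:R * p * ln n%:R / L%:R));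
  last by ring.
apply: ler_wpM2r; last by rewrite ler1n.
by rewrite -!mulrA mulr_ge0 ?ler0n // mulrA rate_ge0.
Qed.

Section OnGoodEvent.
Variable w : Omega n L.
Hypothesis noise_small : forall k,
  `|noise_sum x ths (coord_diff x k) w| <= noise_level L p c_p (coord_diff x k).

Lemma grad_first_le :
  supnorm_first (grad (loss_tau c_tau x ths w) ths) <=
  grad_const c_p c_tau * Num.sqrt (n%:R * p * ln n%:R / L%:R).
Proof.
have C0 := tail_const_gt0 c_p_gt0; have ct := c_tau_gt0.
have Q0 := sqrtr_ge0 (n%:R * p * ln (n%:R : R) / L%:R).
have s0 := sqrtr_ge0 c_p^-1.
have cts0 : 0 <= c_tau * Num.sqrt c_p^-1 by rewrite mulr_ge0 // ltW.
apply: bigmax_le => [|i _]; first exact: mulr_ge0 (ltW (grad_const_gt0 _ _)) Q0.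
rewrite grad_loss_tau; apply: le_trans (ler_normD _ _) _.
have := noise_small (lshift d i); have := noise_level_lshift_le i.
have := penalty_coord_le (lshift d i); rewrite /grad_const.
have := mulr_ge0 (ltW C0) Q0; have := mulr_ge0 cts0 Q0.
lra.
Qed.

Lemma grad_last_le :
  l2_last (grad (loss_tau c_tau x ths w) ths) <=
  grad_const c_p c_tau * Num.sqrt ((d.+1)%:R * n%:R * p * ln n%:R / L%:R).
Proof.
set Y := (d.+1)%:R * n%:R * p * ln n%:R / L%:R.
have Y0 : 0 <= Y by rewrite /Y -!mulrA mulr_ge0 ?ler0n // mulr_ge0 ?ler0n // mulrA rate_ge0.
have Cc0 := ltW (grad_const_gt0 c_p_gt0 c_tau_gt0).
rewrite /l2_last -[X in _ <= X]ger0_norm ?mulr_ge0 ?sqrtr_ge0 //.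
rewrite -sqrtr_sqr ler_sqrt ?sqr_ge0 // exprMn sqr_sqrtr //.
set P := fun k : 'I_d => tau L c_tau x ths * ths (rshift n k) 0.
set N := fun k : 'I_d => noise_level L p c_p (coord_diff x (rshift n k)).
have grad_sqr k : grad (loss_tau c_tau x ths w) ths (rshift n k) ^+ 2 <=
    2 * N k ^+ 2 + 2 * P k ^+ 2.
  rewrite grad_loss_tau -/(P k).
  have S_le : noise_sum x ths (coord_diff x (rshift n k)) w ^+ 2 <= N k ^+ 2.
    by rewrite -real_normK ?num_real // ler_sqr ?nnegrE ?normr_ge0 ?(le_trans _ (noise_small _)).
  have := sqr_ge0 (noise_sum x ths (coord_diff x (rshift n k)) w - P k).
  by rewrite !expr2 in S_le *; nra.
apply: le_trans (ler_sum _ (fun k _ => grad_sqr k)) _.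
rewrite big_split /= -!mulr_sumr.
have := noise_level_rshift_sqsum_le; have := penalty_rshift_sqsum_le.
rewrite -/Y -/(\sum_(k < d) N k ^+ 2) -/(\sum_(k < d) P k ^+ 2) => hP hN.
have s2 : Num.sqrt c_p^-1 ^+ 2 = c_p^-1 by rewrite sqr_sqrtr // invr_ge0 ltW.
have C0 := tail_const_gt0 c_p_gt0.
have cts : 0 <= tail_const c_p * (c_tau * Num.sqrt c_p^-1) * Y.
  by apply: mulr_ge0 => //; apply: mulr_ge0; [exact: ltW | rewrite mulr_ge0 ?sqrtr_ge0 // ltW].
rewrite /grad_const [(4 * tail_const c_p + _) ^+ 2](_ : _ = 16 * tail_const c_p ^+ 2 +
  16 * (tail_const c_p * (c_tau * Num.sqrt c_p^-1)) +
  4 * (c_tau ^+ 2 * Num.sqrt c_p^-1 ^+ 2)); last by ring.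
rewrite s2.
have cinv0 : 0 <= c_p^-1 by rewrite invr_ge0 ltW.
have := mulr_ge0 (sqr_ge0 (tail_const c_p)) Y0.
have := mulr_ge0 (mulr_ge0 (sqr_ge0 c_tau) cinv0) Y0.
lra.
Qed.

End OnGoodEvent.
End GradientBounds.

Lemma noise_sum_abs_le (R : realType) n d L (p c_p : R) (x : 'I_n -> 'rV[R]_d) ths
    (v : 'I_n -> 'I_n -> R) (w : Omega n L) :
  let nv := fun i j => - v i j in
  ~~ (noise_level L p c_p v < noise_sum x ths v w) ->
  ~~ (noise_level L p c_p nv < noise_sum x ths nv w) ->
  `|noise_sum x ths v w| <= noise_level L p c_p v.
Proof.
move=> nv; rewrite -!leNgt.
have -> : noise_sum x ths nv w = - noise_sum x ths v w.
  by rewrite /noise_sum -sumrN; apply: eq_bigr => i _; rewrite -sumrN;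
    apply: eq_bigr => j _; rewrite mulrN.
have -> : noise_level L p c_p nv = noise_level L p c_p v.
  by rewrite /noise_level /sqsum; under eq_bigr => i _ do under eq_bigr => j _ do rewrite sqrrN.
by rewrite ler_norml lerNl => -> ->.
Qed.

Lemma union_count_le (R : realType) n d : (d < n)%N ->
  ((n%:R : R) ^+ 11)^-1 *+ ((n + d) * 2) <= 4 / n%:R ^+ 10.
Proof.
move=> d_lt_n; have n0 : (0 : R) < n%:R by rewrite ltr0n (leq_ltn_trans _ d_lt_n).
rewrite -[_ *+ ((n + d) * 2)]mulr_natl exprS invfM mulrA.
apply: ler_wpM2r; first by rewrite invr_ge0 exprn_ge0 // ltW.
rewrite ler_pdivrMr // -(natrM R 4 n) ler_nat mulnC.
rewrite (@leq_trans (2 * (n + n))) //.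
  by rewrite leq_mul2l leq_add2l ltnW.
by rewrite mulnDr -mulnDl.
Qed.

Theorem lemma20 (R : realType) (c_p c_1 c_tau : R) :
  0 < c_p -> 0 < c_1 -> 0 < c_tau ->
  exists (C C' : R) (N : nat), 0 < C /\ 0 < C' /\
  forall (n d L : nat) (p : R) (x : 'I_n -> 'rV[R]_d) (ths : 'cV[R]_(n + d)),
    (N <= n)%N -> (d < n)%N -> (0 < L)%N ->
    0 < p <= 1 ->
    c_p * ln (n%:R : R) < p * n%:R ->
    (forall i : 'I_n, l2r (x i) <= Num.sqrt ((d.+1)%:R / n%:R)) ->
    (forall v : 'cV[R]_(n + d), l2c (Sigma x *m v) <= c_1 * n%:R * l2c v) ->
    Prob p x ths
      (fun w : Omega n L =>
         let g := grad (loss_tau c_tau x ths w) ths in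
         (supnorm_first g <= C * Num.sqrt (n%:R * p * ln (n%:R : R) / L%:R)) &&
         (l2_last g <= C * Num.sqrt ((d.+1)%:R * n%:R * p * ln (n%:R : R) / L%:R)))
    >= 1 - C' / (n%:R ^+ 10).
Proof.
move=> c_p_gt0 _ c_tau_gt0.
exists (grad_const c_p c_tau), 4, 4%N; split; first exact: grad_const_gt0.
split=> // n d L p x ths n_ge4 d_lt_n L_gt0 /andP[p_gt0 p_le1] lpn x_small _.
have ln_ge1 := ln_nat_ge1 R n_ge4.
have p01 : 0 <= p <= 1 by rewrite ltW.
pose v (kb : 'I_(n + d) * bool) i j :=
  if kb.2 then coord_diff x kb.1 i j else - coord_diff x kb.1 i j.
have v_sqr_le4 kb (i j : 'I_n) : (j < i)%N -> v kb i j ^+ 2 <= 4.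
  by move=> _; rewrite /v; case: kb.2; rewrite ?sqrrN coord_diff_sqr_le4.
pose B kb (w : Omega n L) := noise_level L p c_p (v kb) < noise_sum x ths (v kb) w.
apply: (@le_trans _ _ (1 - \sum_kb Prob p x ths (B kb))).
  rewrite lerD2l lerN2; apply: le_trans (ler_sum _ (fun kb _ =>
    noise_sum_tail_n x ths p01 L_gt0 c_p_gt0 p_gt0 lpn ln_ge1 (v_sqr_le4 kb))) _.
  by rewrite sumr_const card_prod card_ord card_bool; exact: union_count_le.
apply: Prob_union_bound => // w bad.
case: (pickP (B^~ w)) => [kb Bkb | good]; first by exists kb.
have noise_small k : `|noise_sum x ths (coord_diff x k) w| <=
    noise_level L p c_p (coord_diff x k).
  exact: noise_sum_abs_le (negbT (good (k, true))) (negbT (good (k, false))).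
by case/negP: bad; apply/andP; split; [apply: grad_first_le | apply: grad_last_le].
Qed.
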